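(* Let $\mu>0$, $\sigma>0$, $r=\sigma/\mu$, and let $k$ be the unique real solution of $\frac1r=\frac12(3k+k^3)$. Let $\tilde\rho=\frac{1}{1-\frac32rk}$ and $p=\mu-k\sigma$. Then $\tilde\rho$ is the unique solution in $[1,\infty)$ of $\frac{27}{4}r^2=\frac{(\tilde\rho-1)^3}{\tilde\rho^2}$, and moreover $1+\frac{27}{4}r^2\le\tilde\rho\le3+\frac{27}{4}r^2$ and $p=\frac{\tilde\rho+2}{3\tilde\rho}\mu$. *)

From Stdlib Require Import Reals.
Open Scope R_scope.

(** Solving [1/r = (3k + k^3)/2] for [r] gives [r = 2 / (k (3 + k^2))] with
    [k > 0], and then [rho = 1 + 3/k^2].  Writing [u = 3/k^2 = rho - 1], one
    checks [27/4 r^2 = u^3 / (1 + u)^2 = (rho - 1)^3 / rho^2].  The map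
    [x |-> (x - 1)^3 / x^2] is injective on [[1, oo)], which gives uniqueness,
    and [u - 2 <= u^3 / (1 + u)^2 <= u] gives the two bounds on [rho]. *)

From Stdlib Require Import Reals Lra Psatz.
Open Scope R_scope.

Definition cubic_ratio (x : R) : R := (x - 1) ^ 3 / x ^ 2.

Lemma cubic_ratio_inj (x y : R) :
  1 <= x -> 1 <= y -> cubic_ratio x = cubic_ratio y -> x = y.
Proof.
  unfold cubic_ratio; intros hx hy hxy.
  assert (hx2 : 0 < x ^ 2) by nra.
  assert (hy2 : 0 < y ^ 2) by nra.
  assert (hcross : (x - 1) ^ 3 * y ^ 2 = (y - 1) ^ 3 * x ^ 2).
  { apply (Rmult_eq_reg_r (/ (x ^ 2 * y ^ 2))).
    - replace ((x - 1) ^ 3 * y ^ 2 * / (x ^ 2 * y ^ 2))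
        with ((x - 1) ^ 3 / x ^ 2) by (field; repeat split; lra).
      rewrite hxy; field; repeat split; lra.
    - apply Rinv_neq_0_compat, Rgt_not_eq, Rmult_lt_0_compat; assumption. }
  set (a := x - 1) in *; set (b := y - 1) in *.
  replace x with (1 + a) in hcross by (unfold a; ring).
  replace y with (1 + b) in hcross by (unfold b; ring).
  assert (ha : 0 <= a) by (unfold a; lra).
  assert (hb : 0 <= b) by (unfold b; lra).
  (* [b^3 (1+a)^2 - a^3 (1+b)^2] factors through [b - a] with a cofactor
     that is positive unless [a = b = 0]. *)
  assert (hfactor : (a - b) * (a ^ 2 + a * b + b ^ 2 + 2 * a * b * (a + b)
                               + a ^ 2 * b ^ 2) = 0) by nra.
  destruct (Rmult_integral _ _ hfactor) as [hab | hcof].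
  - unfold a, b in hab; lra.
  - assert (a = 0 /\ b = 0) as [ha0 hb0] by nra.
    unfold a, b in ha0, hb0; lra.
Qed.

Lemma cubic_ratio_bounds (x : R) : 1 <= x -> x - 3 <= cubic_ratio x <= x - 1.
Proof.
  unfold cubic_ratio; intros hx.
  assert (hx2 : 0 < x ^ 2) by nra.
  unfold Rdiv.
  split; apply (Rmult_le_reg_r (x ^ 2)); try lra;
    rewrite Rmult_assoc, Rinv_l by lra; nra.
Qed.

Lemma depressed_cubic_ratio (r k : R) :
  0 < r -> 1 / r = (3 * k + k ^ 3) / 2 -> 0 < k /\ r = 2 / (k * (3 + k ^ 2)).
Proof.
  intros hr hk.
  assert (hinv : 0 < 1 / r) by (apply Rdiv_lt_0_compat; lra).
  assert (hkpos : 0 < k) by nra.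
  split; [exact hkpos |].
  assert (hprod : r * (k * (3 + k ^ 2)) = 2).
  { replace (k * (3 + k ^ 2)) with (2 * (1 / r)) by lra. field; lra. }
  apply (Rmult_eq_reg_r (k * (3 + k ^ 2))); [| nra].
  rewrite hprod; field; nra.
Qed.

Section Root.

Variable k : R.
Hypothesis hk : 0 < k.

Let r := 2 / (k * (3 + k ^ 2)).

Lemma rho_at_root : 1 / (1 - 3 / 2 * r * k) = 1 + 3 / k ^ 2.
Proof. unfold r; field; split; nra. Qed.

Lemma cubic_ratio_at_root : 27 / 4 * r ^ 2 = cubic_ratio (1 + 3 / k ^ 2).
Proof. unfold r, cubic_ratio; field; split; nra. Qed.

Lemma one_sub_k_ratio_at_root :
  1 - k * r = (1 + 3 / k ^ 2 + 2) / (3 * (1 + 3 / k ^ 2)).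
Proof. unfold r; field; split; nra. Qed.

End Root.

Theorem lemma8 (mu sigma k : R) (hmu : 0 < mu) (hsigma : 0 < sigma)
  (hk : 1 / (sigma / mu) = (3 * k + k ^ 3) / 2) :
  let r := sigma / mu in
  let rho := 1 / (1 - 3 / 2 * r * k) in
  let p := mu - k * sigma in
  (1 <= rho /\ 27 / 4 * r ^ 2 = (rho - 1) ^ 3 / rho ^ 2 /\
   (forall x : R, 1 <= x -> 27 / 4 * r ^ 2 = (x - 1) ^ 3 / x ^ 2 -> x = rho)) /\
  1 + 27 / 4 * r ^ 2 <= rho /\ rho <= 3 + 27 / 4 * r ^ 2 /\
  p = (rho + 2) / (3 * rho) * mu.
Proof.
  intros r rho p.
  assert (hsigma_r : sigma = r * mu) by (unfold r; field; lra).
  assert (hp : p = (1 - k * r) * mu) by (unfold p; rewrite hsigma_r; ring).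
  assert (hr0 : 0 < r) by (unfold r; apply Rdiv_lt_0_compat; lra).
  destruct (depressed_cubic_ratio r k hr0 hk) as [hkpos hr].
  assert (hrho : rho = 1 + 3 / k ^ 2) by (unfold rho; rewrite hr; apply rho_at_root; lra).
  assert (hrho1 : 1 <= rho).
  { rewrite hrho. assert (0 < 3 / k ^ 2) by (apply Rdiv_lt_0_compat; nra). lra. }
  assert (hratio : 27 / 4 * r ^ 2 = cubic_ratio rho)
    by (rewrite hr, hrho; apply cubic_ratio_at_root; lra).
  pose proof (cubic_ratio_bounds rho hrho1) as hbounds.
  rewrite hratio; unfold cubic_ratio in hbounds |- *.
  split; [split; [exact hrho1 | split; [reflexivity |]] |].
  - intros x hx hx_ratio.
    apply cubic_ratio_inj; [exact hx | exact hrho1 |].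
    symmetry; exact hx_ratio.
  - split; [lra | split; [lra |]].
    rewrite hp, hr, hrho, one_sub_k_ratio_at_root by lra. reflexivity.
Qed.
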